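(* Let $X$ be a Tychonoff Hausdorff $P$-space, $Y$ a Tychonoff space, $f:X\to Y$ a nearly perfect mapping, and $A\subseteq X$. Then $f|_A:A\to f(A)$ is a nearly perfect mapping onto $f(A)$ if and only if $A=f^{-1}(f(A))\cap\overline{A}$.
   Context: A space $X$ is Menger if for each sequence $(\mathcal{U}_n)$ of open covers of $X$ there is a sequence $(\mathcal{V}_n)$ with each $\mathcal{V}_n$ a finite subset of $\mathcal{U}_n$ and $\bigcup_{n}\bigcup\mathcal{V}_n=X$. A $P$-space is a space in which every countable intersection of open sets is open. A mapping $f:X\to Y$ is nearly perfect if it is a closed continuous surjection such that $f^{-1}(y)$ is Menger for every $y\in Y$. *)

From HB Require Import structures.
From mathcomp Require Import all_boot all_algebra.
From mathcomp Require Import all_classical all_reals all_analysis.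
Set Implicit Arguments. Unset Strict Implicit. Unset Printing Implicit Defensive.
Local Open Scope classical_set_scope.

(* Subspaces are the sigma types [set_type A]
   (coercion from [set X]) with the initial (subspace) topology of
   subtype_topology.v. *)

Definition tychonoff_space (T : topologicalType) : Prop :=
  completely_regular_space T /\ hausdorff_space T.

Definition P_space (T : topologicalType) : Prop :=
  forall F : nat -> set T, (forall n, open (F n)) -> open (\bigcap_n F n).

Definition Menger (T : topologicalType) : Prop :=
  forall U : nat -> set (set T),
    (forall n, (forall W, U n W -> open W) /\ [set: T] `<=` \bigcup_(W in U n) W) ->
    exists V : nat -> set (set T),
      (forall n, V n `<=` U n /\ finite_set (V n)) /\
      [set: T] `<=` \bigcup_n \bigcup_(W in V n) W.

Definition closed_map (X Y : topologicalType) (f : X -> Y) : Prop :=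
  forall C : set X, closed C -> closed (f @` C).

Definition nearly_perfect (X Y : topologicalType) (f : X -> Y) : Prop :=
  [/\ continuous f, closed_map f, (forall y, exists x, f x = y) &
      forall y : Y, Menger (f @^-1` [set y])].

Definition restr (X Y : Type) (f : X -> Y) (A : set X) : A -> (f @` A) :=
  fun a => exist _ (f (val a)) (mem_set (imageP f (set_valP a))).
Arguments restr {X Y} f A.

From HB Require Import structures.
From mathcomp Require Import all_boot all_algebra.
From mathcomp Require Import all_classical all_reals all_analysis.
Local Open Scope classical_set_scope.

(* If f|A is nearly perfect and x lies in f^-1(f(A)) and in the closure of A
   but not in A, the fibre K = A ∩ f^-1(f x) is Menger and misses x.  Cover K
   by open sets whose closures avoid x and let V_n be the finite subfamilies
   given by the Menger property: G = ⋂_n (X ∖ ⋃_{B ∈ V_n} cl B) is open since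
   X is a P-space, contains x, and its closure misses K.  Yet f|A maps the
   closed set A ∩ cl G onto a closed subset of f(A) that contains f x, because
   x ∈ cl (A ∩ G); so some point of K lies in cl G.
   Conversely, if A = f^-1(f(A)) ∩ cl A, every closed subset of A is the trace
   of a closed subset of cl A, which f maps to a closed set, and every fibre of
   f|A is the trace of cl A on a Menger fibre of f. *)

Definition Menger_subset {X : topologicalType} (K : set X) : Prop :=
  forall U : nat -> set (set X),
    (forall n, (forall B, U n B -> open B) /\ K `<=` \bigcup_(B in U n) B) ->
    exists V : nat -> set (set X),
      (forall n, V n `<=` U n /\ finite_set (V n)) /\
      K `<=` \bigcup_n \bigcup_(B in V n) B.

Lemma Menger_range {S X : topologicalType} (e : S -> X) :
  continuous e -> Menger S -> Menger_subset (range e).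
Proof.
move=> /continuousP ce MS U hU.
pose back n (W : set S) := xget set0 [set B | U n B /\ e @^-1` B = W].
have [|V' [V'U cov]] := MS (fun n => [set e @^-1` B | B in U n]).
  move=> n; split; first by move=> _ [B UB <-]; exact/ce/(hU n).1.
  move=> s _; have [B UB Bes] := (hU n).2 (e s) (imageT e s).
  by exists (e @^-1` B) => //; exists B.
have backP n W : V' n W -> [set B | U n B /\ e @^-1` B = W] (back n W).
  by move=> /(V'U n).1 [B UB eB]; apply: xgetPex; exists B.
exists (fun n => back n @` V' n); split.
  move=> n; split; last exact: finite_image (V'U n).2.
  by move=> _ [W /backP[UB _] <-].
move=> _ [s _ <-]; have [n _ [W VW Ws]] := cov s I.
exists n => //; exists (back n W); first exact: imageP.
by have [_ eW] := backP n W VW; rewrite -eW in Ws.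
Qed.

Lemma Menger_closed_embedding {S M : topologicalType} (e : S -> M) :
  (forall W : set S, open W -> exists2 B, open B & W = e @^-1` B) ->
  closed (range e) -> Menger M -> Menger S.
Proof.
move=> eopen clE MM U hU.
pose U' n := [set B : set M | open B /\ U n (e @^-1` B)] `|` [set ~` range e].
have [|V' [V'U cov]] := MM U'.
  move=> n; split; first by move=> B [[]//|->]; rewrite openC.
  move=> m _; have [[s _ <-]|nEm] := pselect (range e m); last first.
    by exists (~` range e) => //; right.
  have [W UW Ws] := (hU n).2 s I.
  have [B oB eW] := eopen W ((hU n).1 W UW).
  by exists B; [left; split; rewrite -?eW | rewrite eW in Ws].
exists (fun n => U n `&` [set e @^-1` B | B in V' n]); split.
  move=> n; split; first by move=> W [].
  exact: sub_finite_set (@subIsetr _ _ _) (finite_image _ (V'U n).2).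
move=> s _; have [n _ [B V'B Bes]] := cov (e s) I.
exists n => //; exists (e @^-1` B) => //; split; last by exists B.
have [[]//|eB] := (V'U n).1 B V'B.
by rewrite eB in Bes; case: (Bes (imageT e s)).
Qed.

Lemma hausdorff_open_not_closure {X : topologicalType} {p x : X} :
  hausdorff_space X -> p <> x -> exists B, [/\ open B, B p & ~ closure B x].
Proof.
rewrite open_hausdorff => hX /eqP /hX [[B C] /= [/set_mem Bp /set_mem Cx]].
move=> [oB oC /eqP BC0]; exists B; split => // /(_ C).
by rewrite BC0 => /(_ (open_nbhs_nbhs (conj oC Cx))) [].
Qed.

Lemma P_space_separate_Menger {X : topologicalType} {K : set X} {x : X} :
  hausdorff_space X -> P_space X -> Menger_subset K -> ~ K x ->
  exists G, [/\ open G, G x & forall p, K p -> ~ closure G p].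
Proof.
move=> hX PX MK nKx.
have [|V [VU cov]] := MK (fun=> [set B | open B /\ ~ closure B x]).
  move=> _; split; first by move=> B [].
  move=> p Kp; have [|B [oB Bp nxB]] := @hausdorff_open_not_closure _ p x hX.
    by move=> px; apply: nKx; rewrite -px.
  by exists B.
exists (\bigcap_n ~` \bigcup_(B in V n) closure B); split.
- apply: PX => n; rewrite openC; apply: closed_bigcup; first exact: (VU n).2.
  by move=> B _; exact: closed_closure.
- by move=> n _ [B /(VU n).1 [_ nxB]].
move=> p /cov [n _ [B VB Bp]] clGp.
have [oB _] := (VU n).1 B VB.
have [z [Gz Bz]] := clGp B (open_nbhs_nbhs (conj oB Bp)).
by apply: (Gz n I); exists B => //; exact: subset_closure.
Qed.

Lemma closed_restr_fiber_meets_closure {X Y : topologicalType} {f : X -> Y}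
    {A G : set X} {x : X} :
  continuous f -> closed_map (restr f A) -> closure A x -> (f @` A) (f x) ->
  open G -> G x -> exists2 a, A a /\ f a = f x & closure G a.
Proof.
move=> cf clr clAx fAx oG Gx.
pose D : set A := [set a | closure G (val a)].
have clD : closed D.
  apply: (@preimage_closed _ _ set_val); last exact: closed_closure.
  by move=> a _; exact: initial_continuous.
pose y : f @` A := exist _ (f x) (mem_set fAx).
have [a Da ray] : (restr f A @` D) y.
  apply: contrapT => nDy.
  have [B oB eB] : open (~` (restr f A @` D)) by rewrite openC; exact: clr.
  have Bfx : B (f x) by rewrite -[B (f x)]/((set_val @^-1` B) y) eB.
  have [z [Az [Bfz Gz]]] : A `&` (f @^-1` B `&` G) !=set0.
    apply: clAx; apply: filterI; first exact: cf (open_nbhs_nbhs (conj oB Bfx)).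
    exact: open_nbhs_nbhs.
  pose zA : A := exist _ z (mem_set Az).
  have : (set_val @^-1` B) (restr f A zA) by [].
  rewrite eB; apply; exists zA => //; exact: subset_closure.
exists (val a) => //; split; first exact: set_valP.
by rewrite -[f _]/(val (restr f A a)) ray.
Qed.

Lemma nearly_perfect_restr_saturated {X Y : topologicalType} {f : X -> Y}
    {A : set X} :
  hausdorff_space X -> P_space X -> continuous f ->
  nearly_perfect (restr f A) -> f @^-1` (f @` A) `&` closure A `<=` A.
Proof.
move=> hX PX cf [_ clr _ Mr] x [fAx clAx]; apply: contrapT => nAx.
pose y : f @` A := exist _ (f x) (mem_set fAx).
pose e (t : restr f A @^-1` [set y]) : X := val (val t).
have Me : Menger_subset (range e).
  apply: Menger_range (Mr y) => t.
  by apply: continuous_comp; exact: initial_continuous.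
have [|G [oG Gx clGe]] := P_space_separate_Menger (x:=x) hX PX Me.
  by move=> [t _ ex]; apply: nAx; rewrite -ex; exact: set_valP.
have [a [Aa fax] clGa] :=
  closed_restr_fiber_meets_closure cf clr clAx fAx oG Gx.
apply: (clGe a) clGa.
pose aA : A := exist _ a (mem_set Aa).
have raA : restr f A aA = y by apply: val_inj.
by exists (exist _ aA (mem_set raA)).
Qed.

Section Restriction.
Variables (X Y : topologicalType) (f : X -> Y) (A : set X).

Lemma restr_continuous : continuous f -> continuous (restr f A).
Proof.
move=> cf; apply: continuous_comp_initial => a.
apply: (@continuous_comp _ _ _ set_val f); first exact: initial_continuous.
exact: cf.
Qed.

Lemma restr_surjective (b : f @` A) : exists a, restr f A a = b.
Proof.
have [a Aa fab] := set_valP b.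
by exists (exist _ a (mem_set Aa)); exact: val_inj.
Qed.

Hypothesis satA : f @^-1` (f @` A) `&` closure A `<=` A.

Lemma restr_closed_map : closed_map f -> closed_map (restr f A).
Proof.
move=> clf C clC.
have [B oB eB] : open (~` C) by rewrite openC.
suff -> : restr f A @` C = set_val @^-1` (f @` (closure A `&` ~` B)).
  apply: (@preimage_closed _ _ set_val).
    by move=> b _; exact: initial_continuous.
  apply: clf; apply: closedI; [exact: closed_closure | by rewrite closedC].
apply/seteqP; split => [_ [c Cc <-]|b [z [clAz nBz] fzb]].
  exists (val c) => //; split; first exact/subset_closure/set_valP.
  by move=> Bc; have : (~` C) c by rewrite -eB.
have Az : A z by apply: satA; split => //=; rewrite fzb; exact: (set_valP b).
exists (exist _ z (mem_set Az)); last exact: val_inj.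
apply: contrapT => nCz; apply: nBz.
by have : (~` C) (exist _ z (mem_set Az)) := nCz; rewrite -eB.
Qed.

Lemma Menger_restr_fiber :
  (forall y, Menger (f @^-1` [set y])) ->
  forall b : f @` A, Menger (restr f A @^-1` [set b]).
Proof.
move=> Mf b.
have eP (s : restr f A @^-1` [set b]) : val (val s) \in f @^-1` [set val b].
  exact/mem_set/(congr1 val (set_valP s)).
pose e : restr f A @^-1` [set b] -> f @^-1` [set val b] :=
  fun s => exist _ (val (val s)) (eP s).
apply: (@Menger_closed_embedding _ _ e _ _ (Mf (val b))).
  move=> _ [_ [B oB <-] <-]; exists (set_val @^-1` B) => //.
  by exists B.
have -> : range e = set_val @^-1` closure A.
  apply/seteqP; split => [_ [s _ <-]|m clAm].
    exact: subset_closure (set_valP (val s)).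
  have Am : A (val m).
    by apply: satA; split => //=; rewrite (set_valP m); exact: (set_valP b).
  pose a : A := exist _ (val m) (mem_set Am).
  have rab : restr f A a = b by apply: val_inj; exact: (set_valP m).
  by exists (exist _ a (mem_set rab)) => //; exact: val_inj.
apply: (@preimage_closed _ _ set_val); last exact: closed_closure.
by move=> m _; exact: initial_continuous.
Qed.

Lemma nearly_perfect_restr : nearly_perfect f -> nearly_perfect (restr f A).
Proof.
move=> [cf clf _ Mf]; split; first exact: restr_continuous.
- exact: restr_closed_map.
- exact: restr_surjective.
- exact: Menger_restr_fiber.
Qed.

End Restriction.

Theorem theorem5p21 (X Y : topologicalType) (f : X -> Y) (A : set X) :
  tychonoff_space X -> hausdorff_space X -> P_space X ->
  tychonoff_space Y -> nearly_perfect f ->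
  (nearly_perfect (restr f A) <-> A = f @^-1` (f @` A) `&` closure A).
Proof.
move=> _ hX PX _ npf; split => [npr|eqA].
  apply/seteqP; split.
    by move=> a Aa; split; [exists a | exact: subset_closure].
  by apply: nearly_perfect_restr_saturated npr; case: npf.
by apply: nearly_perfect_restr npf; rewrite -eqA.
Qed.
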